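(* Let $\lambda,\mu$ be strict partitions with $\mu\subseteq\lambda$. If the shifted skew diagram $\widetilde{\lambda/\mu}$ contains the three boxes $(i,j)$, $(i,j+1)$ and $(i+1,j+1)$ for some $i,j$, then $Q_{\lambda/\mu}$ is not $p$-positive.
   Context: For strict partitions $\mu\subseteq\lambda$, the shifted skew diagram $\widetilde{\lambda/\mu}$ is the set of boxes $(r,c)$ with $1\le r\le\ell(\lambda)$ and $r+\mu_r\le c\le r+\lambda_r-1$; $(r,c)$ means row $r$ (rows numbered top to bottom), column $c$. Let $\mathbf{P}'=\{1'<1<2'<2<\cdots\}$. A marked shifted tableau of shape $\widetilde{\lambda/\mu}$ is a filling of its boxes by letters of $\mathbf{P}'$ with rows and columns weakly increasing, each column containing at most one unmarked $k$ and each row at most one marked $k'$ for each $k$; its content counts entries $a$ with $|a|=i$. $Q_{\lambda/\mu}=\sum_T x^{c(T)}$ over all such tableaux. A symmetric function is $p$-positive if its expansion in the power sum basis $\{p_\nu\}$ has all coefficients nonnegative. *)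

From HB Require Import structures.
From mathcomp Require Import all_boot all_order all_algebra.
Unset Printing Implicit Defensive.
Import Order.TTheory GRing.Theory Num.Theory.

Definition strict_partition (l : seq nat) : bool :=
  sorted (fun a b => b < a) l && all (fun x => 0 < x) l.

Definition is_partition (l : seq nat) : bool :=
  sorted geq l && all (fun x => 0 < x) l.

Definition subpart (mu la : seq nat) : bool :=
  (size mu <= size la) && all (fun i => nth 0 mu i <= nth 0 la i) (iota 0 (size mu)).

(* (r,c) (1-indexed rows) lies in the shifted skew diagram of la/mu:
   1 <= r <= l(la) and r + mu_r <= c <= r + la_r - 1. *)
Definition in_sdiag (la mu : seq nat) (b : nat * nat) : bool :=
  let: (r, c) := b in
  [&& 1 <= r, r <= size la, r + nth 0 mu r.-1 <= c & c < r + nth 0 la r.-1].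

Definition sboxes (la mu : seq nat) : seq (nat * nat) :=
  [seq b <- [seq (r, c) | r <- iota 1 (size la), c <- iota 0 (size la + head 0 la)]
     | in_sdiag la mu b].

Definition sbox (la mu : seq nat) := seq_sub (sboxes la mu).

(* Letters of P' with |a| <= N: (i, m) : 'I_N * bool stands for the letter
   (i+1)' if m, and (i+1) if ~~ m.  Order 1' < 1 < 2' < 2 < ... via the key. *)
Definition letter_key {N : nat} (a : 'I_N * bool) : nat := (a.1.+1).*2 - a.2.

Definition is_mtab {la mu : seq nat} {N : nat}
    (T : {ffun sbox la mu -> 'I_N * bool}) : bool :=
  [forall b1 : sbox la mu, forall b2 : sbox la mu,
    [&& (((val b1).1 == (val b2).1) && ((val b1).2 < (val b2).2))
          ==> (letter_key (T b1) <= letter_key (T b2)),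
        (((val b1).2 == (val b2).2) && ((val b1).1 < (val b2).1))
          ==> (letter_key (T b1) <= letter_key (T b2)),
        ([&& (val b1).2 == (val b2).2, (val b1).1 != (val b2).1,
             ~~ (T b1).2 & ~~ (T b2).2]) ==> ((T b1).1 != (T b2).1) &
        ([&& (val b1).1 == (val b2).1, (val b1).2 != (val b2).2,
             (T b1).2 & (T b2).2]) ==> ((T b1).1 != (T b2).1)]].

(* Coefficient of x_1^{alpha_1} ... x_N^{alpha_N} in Q_{la/mu}(x_1,...,x_N):
   number of marked shifted tableaux of shape la/mu with content alpha. *)
Definition Qcoef (la mu : seq nat) (N : nat) (alpha : 'I_N -> nat) : nat :=
  #|[set T : {ffun sbox la mu -> 'I_N * bool} |
      is_mtab T && [forall i : 'I_N, #|[set b | (T b).1 == i]| == alpha i]]|.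

(* Coefficient of x^alpha in p_nu(x_1,...,x_N) = prod_j (x_1^{nu_j}+...+x_N^{nu_j}). *)
Definition pcoef (N : nat) (nu : seq nat) (alpha : 'I_N -> nat) : nat :=
  #|[set f : {ffun 'I_(size nu) -> 'I_N} |
      [forall i : 'I_N, (\sum_(j < size nu | f j == i) nth 0 nu j) == alpha i]]|.

(* A symmetric function F, given by its monomial coefficients in N variables for
   every N, is p-positive if it is a nonnegative rational combination of power
   sums p_nu. *)
Definition p_positive (F : forall N : nat, ('I_N -> nat) -> nat) : Prop :=
  exists s : seq (rat * seq nat),
    all (fun cn => (0 <= cn.1)%R && is_partition cn.2) s /\
    forall (N : nat) (alpha : 'I_N -> nat),
      ((F N alpha)%:R = \sum_(cn <- s) cn.1 * (@pcoef N cn.2 alpha)%:R)%R.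

From mathcomp Require Import all_boot all_order all_algebra.
From mathcomp Require Import zify.
Import Order.TTheory GRing.Theory Num.Theory.

(* Specialise to a single variable x_1.  Every power sum
   restricts to p_nu(x_1) = x_1^|nu|, a monomial with coefficient 1, so a
   p-positive symmetric function that vanishes in one variable has all its
   coefficients equal to zero and therefore vanishes identically
   ([p_positive_vanishing_one_var]).  On the other hand, a marked shifted
   tableau with the single letter 1 cannot fill the three boxes
   (i,j), (i,j+1), (i+1,j+1): the row forces 1' 1 in the top row, and the
   box below the unmarked 1 must be an unmarked 1 again, repeating it in
   a column ([no_one_letter_tableau]).  Hence Q_{la/mu}(x_1) = 0.  Finally
   Q_{la/mu} itself is nonzero: filling box (r,c) by the unmarked letter
   r + c gives a tableau ([Qcoef_nonzero]). *)

Lemma nth_le_head (l : seq nat) (k : nat) : sorted geq l -> nth 0 l k <= head 0 l.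
Proof.
move=> sorted_l; have [k_lt|?] := ltnP k (size l); last by rewrite nth_default.
have geq_trans : transitive geq by move=> a b c ba cb; apply: leq_trans cb ba.
case: l sorted_l k_lt => [|x l] // sorted_l k_lt.
exact: (sorted_leq_nth geq_trans leqnn 0 sorted_l 0 k isT k_lt (leq0n k)).
Qed.

Lemma in_sboxes {la mu : seq nat} {r c : nat} :
  strict_partition la -> in_sdiag la mu (r, c) -> (r, c) \in sboxes la mu.
Proof.
move=> /andP[strict_la _] box_rc; rewrite mem_filter box_rc /=.
have decr_la : sorted geq la.
  by apply: sub_sorted strict_la => a b /ltnW.
have := nth_le_head la r.-1 decr_la.
move: box_rc => /and4P[r_ge1 r_le c_ge c_lt] part_le.
apply: (allpairs_f (fun r c => (r, c))); rewrite mem_iota; lia.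
Qed.

(* Every box of [sbox la mu] satisfies r + c <= 2 (l(la) + la_1), a bound
   independent of the box, used to size the alphabet of a tableau. *)
Lemma sbox_bound (la mu : seq nat) (b : sbox la mu) :
  (val b).1 + (val b).2 <= (size la + head 0 la).*2.
Proof.
case: b => [[r c] /=]; rewrite mem_filter => /andP[_].
by move=> /allpairsP [[x y] [/= x_in y_in [-> ->]]]; move: x_in y_in; rewrite !mem_iota; lia.
Qed.

Lemma no_one_letter_tableau {la mu : seq nat} {i j : nat}
    (box1 : (i, j) \in sboxes la mu) (box2 : (i, j.+1) \in sboxes la mu)
    (box3 : (i.+1, j.+1) \in sboxes la mu) (T : {ffun sbox la mu -> 'I_1 * bool}) :
  ~~ is_mtab T.
Proof.
apply/negP => /forallP mtab_T.
have /forallP /(_ (SeqSub box2)) /and4P [row_12 _ _ marked_12] := mtab_T (SeqSub box1).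
have /forallP /(_ (SeqSub box3)) /and4P [_ col_23 unmarked_23 _] := mtab_T (SeqSub box2).
move: row_12 col_23 unmarked_23 marked_12; rewrite /= !eqxx ltnSn /=.
case: (T _) => [x1 m1]; case: (T _) => [x2 m2]; case: (T _) => [x3 m3].
rewrite (ord1 x1) (ord1 x2) (ord1 x3) /letter_key /= !neq_ltn !ltnSn /=.
by case: m1; case: m2; case: m3.
Qed.

Lemma Qcoef_one_var_eq0 {la mu : seq nat} {i j : nat} :
  strict_partition la ->
  [&& in_sdiag la mu (i, j), in_sdiag la mu (i, j.+1) & in_sdiag la mu (i.+1, j.+1)] ->
  forall alpha : 'I_1 -> nat, Qcoef la mu 1 alpha = 0.
Proof.
move=> strict_la /and3P[box1 box2 box3] alpha.
apply: eq_card0 => T; rewrite inE; apply/negbTE; rewrite negb_and.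
by rewrite (no_one_letter_tableau (in_sboxes strict_la box1)
  (in_sboxes strict_la box2) (in_sboxes strict_la box3)).
Qed.

(* In one variable p_nu = x_1^|nu|: its coefficient of x_1^|nu| is positive. *)
Lemma pcoef_one_var_pos (nu : seq nat) :
  0 < pcoef 1 nu (fun=> \sum_(j < size nu) nth 0 nu j).
Proof.
apply/card_gt0P; exists [ffun=> ord0]; rewrite inE.
apply/forallP => x; rewrite (ord1 x); apply/eqP.
by apply: eq_bigl => k; rewrite ffunE eqxx.
Qed.

(* A p-positive symmetric function vanishing in one variable is zero: each
   p_nu contributes its coefficient times a positive number in one variable. *)
Lemma p_positive_vanishing_one_var {F : forall N : nat, ('I_N -> nat) -> nat} :
  p_positive F -> (forall alpha : 'I_1 -> nat, F 1 alpha = 0) ->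
  forall (N : nat) (alpha : 'I_N -> nat), F N alpha = 0.
Proof.
move=> [s [coef_ok expansion]] F1_eq0.
have coef_eq0 cn : cn \in s -> cn.1 = 0%R.
  move=> cn_in; have := expansion 1 (fun=> \sum_(j < size cn.2) nth 0 cn.2 j).
  rewrite F1_eq0 big_seq => /esym/eqP; rewrite psumr_eq0; last first.
    move=> x /(allP coef_ok) /andP[x_ge0 _].
    by rewrite mulr_ge0 // ler0n.
  move=> /allP /(_ cn cn_in); rewrite cn_in /= mulf_eq0 pnatr_eq0.
  by rewrite eqn0Ngt pcoef_one_var_pos orbF => /eqP.
move=> N alpha; apply/eqP; rewrite -(eqr_nat rat) expansion big_seq big1 //.
by move=> cn cn_in; rewrite coef_eq0 // mul0r.
Qed.

(* Q_{la/mu} is a nonzero symmetric function: filling box (r,c) with the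
   unmarked letter r + c is a marked shifted tableau. *)
Lemma Qcoef_nonzero (la mu : seq nat) :
  exists (N : nat) (alpha : 'I_N -> nat), Qcoef la mu N alpha != 0.
Proof.
pose K := (size la + head 0 la).*2.
pose T : {ffun sbox la mu -> 'I_K.+1 * bool} :=
  [ffun b => (inord ((val b).1 + (val b).2), false)].
have T_letter b : nat_of_ord (T b).1 = (val b).1 + (val b).2.
  by rewrite ffunE /= inordK // ltnS sbox_bound.
have T_unmarked b : (T b).2 = false by rewrite ffunE.
have mtab_T : is_mtab T.
  apply/forallP => x; apply/forallP => y; rewrite /letter_key !T_unmarked !T_letter.
  rewrite -!(inj_eq val_inj) /= !T_letter.
  case: x => [[r1 c1] ?]; case: y => [[r2 c2] ?] /=.
  by apply/and4P; split; apply/implyP; rewrite ?andbF //=; lia.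
exists K.+1, (fun k => #|[set b | (T b).1 == k]|).
rewrite -lt0n; apply/card_gt0P; exists T; rewrite inE mtab_T /=.
by apply/forallP.
Qed.

Theorem mainTheorem8 (la mu : seq nat) :
  strict_partition la -> strict_partition mu -> subpart mu la ->
  (exists i j : nat,
     [&& in_sdiag la mu (i, j), in_sdiag la mu (i, j.+1) & in_sdiag la mu (i.+1, j.+1)]) ->
  ~ p_positive (Qcoef la mu).
Proof.
move=> strict_la _ _ [i [j L_shape]] p_pos.
have Q_eq0 := p_positive_vanishing_one_var p_pos (Qcoef_one_var_eq0 strict_la L_shape).
have [N [alpha]] := Qcoef_nonzero la mu.
by rewrite Q_eq0.
Qed.
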